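(* Let $A,K$ be algebras and $\xi:A\to\mathrm{Out}(K)$ a coupling admitting at least one bimultiplication law covering it. Then the cohomology class of $f(\mu,h)$ in the Hochschild cohomology $HH^3(A,\mathrm{Anni}K)$ (with coefficients in the $A$-bimodule $\mathrm{Anni}K$ determined by $\xi$) is independent of the choice of the bimultiplication law $\mu$ covering $\xi$ and of the hindrance $h$ of $\mu$. This class is denoted $\mathrm{Obs}(\xi)$ (the obstruction of $\xi$).
   Context: All algebras are associative, not necessarily unital, over a field $\mathbb F$. For an algebra $K$, a bimultiplication of $K$ is a pair $(u,v)$ of linear maps $K\to K$ with $k_1u(k_2)=v(k_1)k_2$, $u(k_1k_2)=u(k_1)k_2$, $v(k_1k_2)=k_1v(k_2)$; these form an algebra $\mathrm{Mul}(K)$ with product $(u_1,v_1)(u_2,v_2)=(u_1\circ u_2,\ v_2\circ v_1)$. $\epsilon:K\to\mathrm{Mul}(K)$, $\epsilon(k_0)=(k\mapsto k_0k,\ k\mapsto kk_0)$; $\mathrm{Inn}(K)=\epsilon(K)$, $\mathrm{Out}(K)=\mathrm{Mul}(K)/\mathrm{Inn}(K)$ with projection $\natural$; $\mathrm{Anni}K=\{k: kK=0=Kk\}$. A coupling is an algebra homomorphism $\xi:A\to\mathrm{Out}(K)$. A bimultiplication law covering $\xi$ is a linear map $\mu:A\to\mathrm{Mul}(K)$, $\mu(a)=(u_a,v_a)$, with $\natural\circ\mu=\xi$ and $u_av_b=v_bu_a$ for all $a,b\in A$; then $\mathrm{Anni}K$ is an $A$-bimodule via $a\cdot n=u_a(n)$,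 $n\cdot a=v_a(n)$, independent of the choice of $\mu$. Curvature: $R^\mu(a_1,a_2)=\mu(a_1)\mu(a_2)-\mu(a_1a_2)$. A hindrance is a bilinear $h:A\times A\to K$ with $\epsilon\circ h=R^\mu$. $f(\mu,h)(a_1,a_2,a_3)=u_{a_1}h(a_2,a_3)-h(a_1a_2,a_3)+h(a_1,a_2a_3)-v_{a_3}h(a_1,a_2)$; it is a Hochschild $3$-cocycle with values in $\mathrm{Anni}K$. Hochschild cochains $C^n(A,N)$ are $n$-linear maps $A^n\to N$ with differential $\delta g(a_1,\dots,a_{n+1})=a_1g(a_2,\dots)+\sum_{i=1}^n(-1)^ig(\dots,a_ia_{i+1},\dots)+(-1)^{n+1}g(a_1,\dots,a_n)a_{n+1}$. *)

From HB Require Import structures.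
From mathcomp Require Import all_boot all_order all_algebra.
Set Implicit Arguments. Unset Strict Implicit. Unset Printing Implicit Defensive.
Import GRing.Theory.
Local Open Scope ring_scope.

Record nalg (F : fieldType) := NAlg {
  ncar :> lmodType F;
  nmul : ncar -> ncar -> ncar;
  nmulA : forall x y z, nmul x (nmul y z) = nmul (nmul x y) z;
  nmul_linl : forall (c : F) x y z, nmul (c *: x + y) z = c *: nmul x z + nmul y z;
  nmul_linr : forall (c : F) x y z, nmul z (c *: x + y) = c *: nmul z x + nmul z y
}.

Section Defs.
Variable F : fieldType.

Definition is_lin (V W : lmodType F) (f : V -> W) :=
  forall (c : F) x y, f (c *: x + y) = c *: f x + f y.

Definition is_bilin (V W : lmodType F) (g : V -> V -> W) :=
  (forall y, is_lin (fun x => g x y)) /\ (forall x, is_lin (g x)).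

Variables (A K : nalg F).

Definition is_bimul (u v : K -> K) :=
  [/\ is_lin u, is_lin v,
      (forall k1 k2, nmul k1 (u k2) = nmul (v k1) k2),
      (forall k1 k2, u (nmul k1 k2) = nmul (u k1) k2) &
      (forall k1 k2, v (nmul k1 k2) = nmul k1 (v k2))].

Definition is_inn (u v : K -> K) :=
  exists k0 : K, (forall k, u k = nmul k0 k) /\ (forall k, v k = nmul k k0).

Definition in_anni (n : K) := forall k, nmul n k = 0 /\ nmul k n = 0.

(* A coupling xi : A -> Out(K) = Mul(K)/Inn(K), given by a choice of
   representatives (xu a, xv a) in Mul(K) of xi(a); xi is linear and
   multiplicative, i.e. these identities hold modulo Inn(K). *)
Definition is_coupling (xu xv : A -> K -> K) :=
  [/\ (forall a, is_bimul (xu a) (xv a)),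
      (forall (c : F) a b,
         is_inn (fun k => xu (c *: a + b) k - (c *: xu a k + xu b k))
                (fun k => xv (c *: a + b) k - (c *: xv a k + xv b k))) &
      (forall a b,
         is_inn (fun k => xu a (xu b k) - xu (nmul a b) k)
                (fun k => xv b (xv a k) - xv (nmul a b) k))].

Definition is_bimul_law (xu xv : A -> K -> K) (u v : A -> K -> K) :=
  [/\ (forall (c : F) a b k, u (c *: a + b) k = c *: u a k + u b k),
      (forall (c : F) a b k, v (c *: a + b) k = c *: v a k + v b k),
      (forall a, is_bimul (u a) (v a)),
      (forall a, is_inn (fun k => u a k - xu a k) (fun k => v a k - xv a k)) &
      (forall a b k, u a (v b k) = v b (u a k))].

Definition is_hindrance (u v : A -> K -> K) (h : A -> A -> K) :=
  is_bilin h /\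
  forall a1 a2 k,
    nmul (h a1 a2) k = u a1 (u a2 k) - u (nmul a1 a2) k /\
    nmul k (h a1 a2) = v a2 (v a1 k) - v (nmul a1 a2) k.

Definition fobs (u v : A -> K -> K) (h : A -> A -> K) (a1 a2 a3 : A) : K :=
  u a1 (h a2 a3) - h (nmul a1 a2) a3 + h a1 (nmul a2 a3) - v a3 (h a1 a2).

(* Hochschild differential C^2(A, Anni K) -> C^3(A, Anni K),
   bimodule structure a.n = u a n, n.a = v a n *)
Definition hoch_d2 (u v : A -> K -> K) (g : A -> A -> K) (a1 a2 a3 : A) : K :=
  u a1 (g a2 a3) - g (nmul a1 a2) a3 + g a1 (nmul a2 a3) - v a3 (g a1 a2).

Definition hh3_same_class (u v : A -> K -> K) (f1 f2 : A -> A -> A -> K) :=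
  exists g : A -> A -> K,
    [/\ is_bilin g, (forall a1 a2, in_anni (g a1 a2)) &
        forall a1 a2 a3, f1 a1 a2 a3 - f2 a1 a2 a3 = hoch_d2 u v g a1 a2 a3].

End Defs.

From mathcomp Require Import all_boot all_order all_algebra.
From mathcomp Require Import boolp classical_sets.
Set Implicit Arguments. Unset Strict Implicit. Unset Printing Implicit Defensive.
Import GRing.Theory.
Local Open Scope ring_scope.

(* Two bimultiplication laws covering xi differ pointwise by inner
   bimultiplications, and the inner elements can be chosen linearly in a
   (a linear section of a surjective linear relation, by Zorn's lemma): up to
   that choice, mu' = mu + eps o k.  Transporting a hindrance h of mu along k
   gives a hindrance h^k of mu' with f(mu', h^k) = f(mu, h) on the nose.  Two
   hindrances of the same law differ by a bilinear map g into Anni K, and then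
   f(mu', h^k) - f(mu', h') = delta g, where delta only depends on the
   bimodule structure of Anni K, which is the same for mu and mu'. *)

Lemma add0r_eq0 (V : zmodType) (x : V) : 0 + x = 0 -> x = 0.
Proof. by rewrite add0r. Qed.

Ltac move_last t :=
  repeat match goal with
  | |- context [?X + t + ?Y] =>
      lazymatch Y with t => fail | _ => rewrite [X + t + Y]addrAC end
  end.

(* Proves an identity between sums of atoms in an abelian group: both sides
   are moved to the left of [= 0], and each atom is cancelled against its
   opposite by moving both to the end of the left-associated sum. *)
Ltac zmod_cancel :=
  apply/eqP; rewrite -subr_eq0; apply/eqP;
  rewrite ?opprD ?opprK ?oppr0 ?addr0 ?add0r ?addrA;
  apply: add0r_eq0; rewrite ?addrA;
  repeat match goal with
  | |- context [?m] =>
      lazymatch m with - ?t => move_last t; move_last m; rewrite addrK end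
  end;
  try done.

Section Linearity.
Variable F : fieldType.

Lemma linD (V W : lmodType F) (f : V -> W) : is_lin f -> forall x y, f (x + y) = f x + f y.
Proof. by move=> Hf x y; rewrite -[x]scale1r Hf !scale1r. Qed.

Lemma lin0 (V W : lmodType F) (f : V -> W) : is_lin f -> f 0 = 0.
Proof. by move=> Hf; apply/(addrI (f 0)); rewrite -linD // !addr0. Qed.

Lemma linZ (V W : lmodType F) (f : V -> W) : is_lin f -> forall c x, f (c *: x) = c *: f x.
Proof. by move=> Hf c x; rewrite -[c *: x]addr0 Hf (lin0 Hf) addr0. Qed.

Lemma linN (V W : lmodType F) (f : V -> W) : is_lin f -> forall x, f (- x) = - f x.
Proof. by move=> Hf x; rewrite -scaleN1r linZ // scaleN1r. Qed.

Lemma is_linB (V W : lmodType F) (f g : V -> W) :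
  is_lin f -> is_lin g -> is_lin (fun x => f x - g x).
Proof. by move=> Hf Hg c x y; rewrite Hf Hg scalerBr; zmod_cancel. Qed.

Lemma is_bilinB (V W : lmodType F) (g g' : V -> V -> W) :
  is_bilin g -> is_bilin g' -> is_bilin (fun x y => g x y - g' x y).
Proof.
by move=> [gl gr] [g'l g'r]; split=> [y|x]; apply: is_linB.
Qed.

Variable K : nalg F.

Lemma nmulDl (x y z : K) : nmul (x + y) z = nmul x z + nmul y z.
Proof. by rewrite -[x]scale1r nmul_linl !scale1r. Qed.

Lemma nmulDr (x y z : K) : nmul z (x + y) = nmul z x + nmul z y.
Proof. by rewrite -[x]scale1r nmul_linr !scale1r. Qed.

Lemma nmulNl (x z : K) : nmul (- x) z = - nmul x z.
Proof. by apply: (linN (f := fun x => nmul x z)) => c a b; rewrite nmul_linl. Qed.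

Lemma nmulNr (x z : K) : nmul z (- x) = - nmul z x.
Proof. by apply: (linN (f := nmul z)) => c a b; rewrite nmul_linr. Qed.

End Linearity.

Section LinearSection.
Local Open Scope classical_set_scope.
Variables (F : fieldType) (V W : lmodType F) (R : V -> W -> Prop).
Hypothesis R_total : forall a, exists w, R a w.
Hypothesis R_lin :
  forall c a b w w', R a w -> R b w' -> R (c *: a + b) (c *: w + w').

(* Graphs of linear maps defined on a subspace of V and selecting from R. *)
Definition partial_section (G : set (V * W)) :=
  [/\ forall a w, G (a, w) -> R a w,
      forall a w w', G (a, w) -> G (a, w') -> w = w' &
      forall c a b w w', G (a, w) -> G (b, w') -> G (c *: a + b, c *: w + w')].

Lemma partial_sectionZ G c a w :
  partial_section G -> G (a, w) -> G (c *: a, c *: w).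
Proof.
case=> _ _ Glin Gaw; have := Glin (c - 1) a a w w Gaw Gaw.
by rewrite !scalerBl !scale1r !subrK.
Qed.

Lemma partial_section00 G a w : partial_section G -> G (a, w) -> G (0, 0).
Proof.
by case=> _ _ Glin Gaw; have := Glin (-1) _ _ _ _ Gaw Gaw; rewrite !scaleN1r !addNr.
Qed.

Lemma partial_section_bigcup (FF : set (set (V * W))) :
  FF `<=` partial_section -> total_on FF subset ->
  partial_section (\bigcup_(G in FF) G).
Proof.
move=> FFsec FFtot; split.
- by move=> a w [G /FFsec[GR _ _] /GR].
- move=> a w w' [G FG Gaw] [H FH Haw'].
  have [GH|HG] := FFtot _ _ FG FH.
  + by have [_ Hfun _] := FFsec _ FH; exact: Hfun (GH _ Gaw) Haw'.
  + by have [_ Gfun _] := FFsec _ FG; exact: Gfun Gaw (HG _ Haw').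
- move=> c a b w w' [G FG Gaw] [H FH Hbw'].
  have [GH|HG] := FFtot _ _ FG FH.
  + by have [_ _ Hlin] := FFsec _ FH; exists H => //; exact: Hlin (GH _ Gaw) Hbw'.
  + by have [_ _ Glin] := FFsec _ FG; exists G => //; exact: Glin Gaw (HG _ Hbw').
Qed.

Lemma partial_section_setU00 G :
  partial_section G -> partial_section (G `|` [set (0, 0)]).
Proof.
move=> Gsec; have [GR Gfun Glin] := Gsec.
have R00 : R 0 0.
  by have [w Rw] := R_total 0; have := R_lin (-1) Rw Rw; rewrite !scaleN1r !addNr.
have G0 w : G (0, w) -> w = 0.
  by move=> G0w; apply: Gfun G0w (partial_section00 Gsec G0w).
split.
- by move=> a w [/GR //|[-> ->]].
- move=> a w w' [Gaw|[-> ->]] [Gaw'|/pair_equal_spec[a0 w'0]]; subst.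
  + exact: Gfun Gaw Gaw'.
  + exact: G0.
  + by rewrite (G0 _ Gaw').
  + by [].
- move=> c a b w w' [Gaw|[-> ->]] [Gbw'|[-> ->]].
  + by left; apply: Glin.
  + by left; rewrite !addr0; apply: partial_sectionZ.
  + by left; rewrite !scaler0 !add0r.
  + by right; rewrite !scaler0 !addr0.
Qed.

Definition section_extension (G : set (V * W)) (a0 : V) (w0 : W) : set (V * W) :=
  fun p => exists c s ws, G (s, ws) /\ p = (s + c *: a0, ws + c *: w0).

Lemma partial_section_extension G a0 w0 :
  partial_section G -> R a0 w0 -> (forall w, ~ G (a0, w)) ->
  partial_section (section_extension G a0 w0).
Proof.
move=> Gsec Ra0 a0_free; have [GR Gfun Glin] := Gsec; split.
- move=> a w [c [s [ws [Gs [-> ->]]]]].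
  by rewrite addrC [ws + _]addrC; apply: R_lin => //; apply: GR.
- move=> a w w' [c [s [ws [Gs [-> ->]]]]] [c' [s' [ws' [Gs' [E ->]]]]].
  have [cc'|neq_cc'] := eqVneq c c'.
    by subst c'; move/addIr: E Gs' => <- /(Gfun _ _ _ Gs) ->.
  (* for c <> c' the equation puts a0 in the domain of G *)
  have a0E : a0 = (c - c')^-1 *: (s' - s).
    have <- : (c - c') *: a0 = s' - s.
      by rewrite scalerBl; apply/eqP; rewrite subr_eq addrAC -E addrAC subrr add0r.
    by rewrite scalerA mulVf ?scale1r // subr_eq0.
  case: (a0_free ((c - c')^-1 *: (ws' - ws))); rewrite a0E.
  apply: partial_sectionZ => //; have := Glin (-1) _ _ _ _ Gs Gs'.
  by rewrite !scaleN1r [- s + _]addrC [- ws + _]addrC.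
- move=> d a b w w' [c [s [ws [Gs [-> ->]]]]] [c' [s' [ws' [Gs' [-> ->]]]]].
  exists (d * c + c'), (d *: s + s'), (d *: ws + ws'); split; first exact: Glin.
  by rewrite !scalerDr !scalerDl !scalerA; congr pair; rewrite addrACA.
Qed.

Lemma linear_section : exists k : V -> W, is_lin k /\ forall a, R a (k a).
Proof.
have [G [Gsec Gmax]] : exists G, partial_section G /\
    forall H, G `<` H -> ~ partial_section H.
  by apply: Zorn_bigcup => FF; apply: partial_section_bigcup.
have [GR Gfun Glin] := Gsec.
have G00 : G (0, 0).
  apply: contrapT => nG00; apply: (Gmax _ _ (partial_section_setU00 Gsec)).
  by split=> [p Gp|/(_ (0, 0)) sub]; [left | apply/nG00/sub; right].
have Gtot a0 : exists w, G (a0, w).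
  apply: contrapT => a0_undef; have [w0 Ra0] := R_total a0.
  have a0_free w : ~ G (a0, w) by move=> Gw; apply: a0_undef; exists w.
  apply: (Gmax _ _ (partial_section_extension Gsec Ra0 a0_free)); split.
    by move=> [s ws] Gs; exists 0, s, ws; rewrite !scale0r !addr0.
  move=> /(_ (a0, w0)) sub; apply/a0_free/sub.
  by exists 1, 0, 0; rewrite !scale1r !add0r.
exists (fun a => projT1 (cid (Gtot a))); split.
  move=> c a b.
  case: (cid (Gtot (c *: a + b))) => w Gw /=.
  case: (cid (Gtot a)) => wa Ga /=; case: (cid (Gtot b)) => wb Gb /=.
  exact: Gfun Gw (Glin _ _ _ _ _ Ga Gb).
by move=> a; case: (cid (Gtot a)) => w Gw /=; apply: GR.
Qed.

End LinearSection.

Section BimulLaws.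
Variables (F : fieldType) (A K : nalg F).

Lemma bimul_law_inner_shift (xu xv u v u' v' : A -> K -> K) :
  is_bimul_law xu xv u v -> is_bimul_law xu xv u' v' ->
  exists k : A -> K, [/\ is_lin k,
    forall a z, u' a z = u a z + nmul (k a) z &
    forall a z, v' a z = v a z + nmul z (k a)].
Proof.
move=> [u_lin v_lin _ u_cov _] [u'_lin v'_lin _ u'_cov _].
pose R a w := (forall z, u' a z = u a z + nmul w z) /\
              (forall z, v' a z = v a z + nmul z w).
have [k [k_lin Rk]] : exists k, is_lin k /\ forall a, R a (k a).
  apply: linear_section.
  - move=> a; have [p [up vp]] := u_cov a; have [p' [up' vp']] := u'_cov a.
    exists (p' - p); split=> z.
    + by rewrite nmulDl nmulNl -up -up'; zmod_cancel.
    + by rewrite nmulDr nmulNr -vp -vp'; zmod_cancel.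
  - move=> c a b w w' [uw vw] [uw' vw']; split=> z.
    + by rewrite u_lin u'_lin nmul_linl uw uw' scalerDr; zmod_cancel.
    + by rewrite v_lin v'_lin nmul_linr vw vw' scalerDr; zmod_cancel.
by exists k; split=> // a z; [apply: (Rk a).1 | apply: (Rk a).2].
Qed.

Lemma hindrance_subr_anni (u v : A -> K -> K) (h h' : A -> A -> K) :
  is_hindrance u v h -> is_hindrance u v h' ->
  forall a1 a2, in_anni (h a1 a2 - h' a1 a2).
Proof.
move=> [_ hE] [_ h'E] a1 a2 z.
rewrite nmulDl nmulNl nmulDr nmulNr (hE a1 a2 z).1 (h'E a1 a2 z).1.
by rewrite (hE a1 a2 z).2 (h'E a1 a2 z).2 !subrr.
Qed.

Section Bimul.
Variables (u v : A -> K -> K).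
Hypothesis uv_bimul : forall a, is_bimul (u a) (v a).

Let uD a x y : u a (x + y) = u a x + u a y.
Proof. by case: (uv_bimul a) => ulin _ _ _ _; apply: linD. Qed.
Let uN a x : u a (- x) = - u a x.
Proof. by case: (uv_bimul a) => ulin _ _ _ _; apply: linN. Qed.
Let uZ a c x : u a (c *: x) = c *: u a x.
Proof. by case: (uv_bimul a) => ulin _ _ _ _; apply: linZ. Qed.
Let vD a x y : v a (x + y) = v a x + v a y.
Proof. by case: (uv_bimul a) => _ vlin _ _ _; apply: linD. Qed.
Let vN a x : v a (- x) = - v a x.
Proof. by case: (uv_bimul a) => _ vlin _ _ _; apply: linN. Qed.
Let vZ a c x : v a (c *: x) = c *: v a x.
Proof. by case: (uv_bimul a) => _ vlin _ _ _; apply: linZ. Qed.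
Let vmul_u a k1 k2 : nmul (v a k1) k2 = nmul k1 (u a k2).
Proof. by case: (uv_bimul a) => _ _ -> _ _. Qed.
Let u_mul a k1 k2 : u a (nmul k1 k2) = nmul (u a k1) k2.
Proof. by case: (uv_bimul a) => _ _ _ -> _. Qed.
Let v_mul a k1 k2 : v a (nmul k1 k2) = nmul k1 (v a k2).
Proof. by case: (uv_bimul a) => _ _ _ _ ->. Qed.

Lemma fobsB (h h' : A -> A -> K) a1 a2 a3 :
  fobs u v h a1 a2 a3 - fobs u v h' a1 a2 a3 =
  hoch_d2 u v (fun b1 b2 => h b1 b2 - h' b1 b2) a1 a2 a3.
Proof. by rewrite /fobs /hoch_d2 uD uN vD vN; zmod_cancel. Qed.

Section Shift.
Variables (u' v' : A -> K -> K) (k : A -> K).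
Hypothesis u'E : forall a z, u' a z = u a z + nmul (k a) z.
Hypothesis v'E : forall a z, v' a z = v a z + nmul z (k a).

Lemma hoch_d2_shift (g : A -> A -> K) :
  (forall a1 a2, in_anni (g a1 a2)) ->
  forall a1 a2 a3, hoch_d2 u' v' g a1 a2 a3 = hoch_d2 u v g a1 a2 a3.
Proof.
move=> g_anni a1 a2 a3.
by rewrite /hoch_d2 u'E v'E (g_anni a2 a3 (k a1)).2 (g_anni a1 a2 (k a3)).1 !addr0.
Qed.

Definition shift_hindrance (h : A -> A -> K) (a1 a2 : A) : K :=
  h a1 a2 + (u a1 (k a2) + v a2 (k a1) + nmul (k a1) (k a2) - k (nmul a1 a2)).

Hypothesis u_lin : forall (c : F) a b z, u (c *: a + b) z = c *: u a z + u b z.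
Hypothesis v_lin : forall (c : F) a b z, v (c *: a + b) z = c *: v a z + v b z.
Hypothesis k_lin : is_lin k.

Lemma is_hindrance_shift h :
  is_hindrance u v h -> is_hindrance u' v' (shift_hindrance h).
Proof.
move=> [[hl hr] hE]; split.
  rewrite /shift_hindrance; split=> [y|x] c a b.
  - rewrite hl u_lin nmul_linl !k_lin vD vZ nmul_linl !scalerDr ?scalerN.
    zmod_cancel.
  - rewrite hr v_lin nmul_linr !k_lin uD uZ nmul_linr !scalerDr ?scalerN.
    zmod_cancel.
move=> a1 a2 z; rewrite /shift_hindrance; split.
- rewrite ?nmulDl ?nmulNl (hE a1 a2 z).1 !u'E.
  rewrite ?uD ?uN ?nmulDl ?nmulDr ?u_mul ?vmul_u ?nmulA.
  zmod_cancel.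
- rewrite ?nmulDr ?nmulNr (hE a1 a2 z).2 !v'E.
  rewrite ?vD ?vN ?nmulDl ?nmulDr ?v_mul ?vmul_u ?nmulA.
  zmod_cancel.
Qed.

Hypothesis uv_comm : forall a b z, u a (v b z) = v b (u a z).

Lemma fobs_shift h : is_hindrance u v h ->
  forall a1 a2 a3, fobs u' v' (shift_hindrance h) a1 a2 a3 = fobs u v h a1 a2 a3.
Proof.
move=> [_ hE] a1 a2 a3.
have hEl b1 b2 z := (hE b1 b2 z).1; have hEr b1 b2 z := (hE b1 b2 z).2.
rewrite /fobs /shift_hindrance !u'E !v'E.
rewrite ?(uD, uN, vD, vN, nmulDl, nmulDr, nmulNl, nmulNr, hEl, hEr).
rewrite ?(u_mul, v_mul, vmul_u, nmulA, uv_comm).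
zmod_cancel.
Qed.

End Shift.
End Bimul.
End BimulLaws.

Theorem mainTheorem8 (F : fieldType) (A K : nalg F) (xu xv : A -> K -> K)
  (u v : A -> K -> K) (h : A -> A -> K)
  (u' v' : A -> K -> K) (h' : A -> A -> K) :
  is_coupling xu xv ->
  is_bimul_law xu xv u v -> is_hindrance u v h ->
  is_bimul_law xu xv u' v' -> is_hindrance u' v' h' ->
  hh3_same_class u v (fobs u v h) (fobs u' v' h').
Proof.
move=> _ law hind law' hind'.
have [k [k_lin u'E v'E]] := bimul_law_inner_shift law law'.
have [u_lin v_lin uv_bimul _ uv_comm] := law.
have [_ _ u'v'_bimul _ _] := law'.
have hind_k := is_hindrance_shift uv_bimul u'E v'E u_lin v_lin k_lin hind.
have hk_anni := hindrance_subr_anni hind_k hind'.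
exists (fun a1 a2 => shift_hindrance u v k h a1 a2 - h' a1 a2).
split=> // [|a1 a2 a3]; first exact: is_bilinB hind_k.1 hind'.1.
rewrite -(fobs_shift uv_bimul u'E v'E uv_comm hind) fobsB //.
by apply: (hoch_d2_shift u'E v'E).
Qed.
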